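(* Let $n\ge 1$, $m=2$, $0\le k\le n-1$. There is a learning algorithm that, given $n$ and $k$, exactly identifies every (complete or incomplete) acyclic $k$-bounded binary CP-net $N^*$ over $n$ variables using $O(n\mathcal{U}_k+e_{N^*}\log_2(n))$ membership queries over swap examples in $\overline{\mathcal{X}}_{swap}$, where $e_{N^*}$ is the number of edges of $N^*$.
   Context: Variables $V=\{v_1,\dots,v_n\}$, each with a domain of size $2$. An outcome assigns a value to every variable; $\mathcal{O}_X$ denotes assignments to $X\subseteq V$. A CP-net specifies for each $v_i$ a parent set $Pa(v_i)\subseteq V\setminus\{v_i\}$ and, for each context $\gamma\in\mathcal{O}_{Pa(v_i)}$, either a strict order $\succ^{v_i}_\gamma$ on $D_{v_i}$ or nothing (complete if always given, incomplete otherwise); parents are non-dummy. Acyclic: the graph with edges $(v_j,v_i)$, $v_j\in Pa(v_i)$, is acyclic; $k$-bounded: all $|Pa(v_i)|\le k$. Improving flip: changing only $v_i$ to a value preferred under $\succ^{v_i}_{o[Pa(v_i)]}$ (when given); $o'\succ o$ iff a nonempty sequence of improving flips leads from $o$ to $o'$. $\overline{\mathcal{X}}_{swap}$ is the set of all ordered pairs $x=(x.1,x.2)$ of outcomes differing in exactly one variable. A membership query for $x$ returns $1$ iff $x.1\succ x.2$ under the unknown target $N^*$, else $0$ (always correct). $\mathcal{U}_k$ is the smallest size of a set $S\subseteq\{0,1\}^{n-1}$ whose projection onto every set of $k$ coordinates contains all $2^k$ binary vectors. *)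

From mathcomp Require Import all_boot.
Set Implicit Arguments. Unset Strict Implicit. Unset Printing Implicit Defensive.

Definition outcome (n : nat) := {ffun 'I_n -> bool}.

(* A binary CP-net: parent sets, and for each variable a conditional
   preference table.  cpt i o = Some b means that, in the context
   o[Pa(i)], value b is strictly preferred to ~~ b for v_i; None means
   that no order is given for this context (incomplete CP-net).  *)
Record cpnet (n : nat) := CPNet {
  Pa  : 'I_n -> {set 'I_n};
  cpt : 'I_n -> outcome n -> option bool
}.

Definition cpnet_wf n (N : cpnet n) : Prop :=
  (forall i, i \notin Pa N i) /\
  (forall i (o o' : outcome n),
      (forall j, j \in Pa N i -> o j = o' j) -> cpt N i o = cpt N i o') /\
  (forall i j, j \in Pa N i ->
      exists (o o' : outcome n),
        (forall l, l != j -> o l = o' l) /\ cpt N i o <> cpt N i o').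

Definition dep_edge n (N : cpnet n) : rel 'I_n := fun j i => j \in Pa N i.

Definition acyclic n (N : cpnet n) : Prop :=
  forall i, ~~ [exists j, dep_edge N i j && connect (dep_edge N) j i].

Definition k_bounded n (k : nat) (N : cpnet n) : Prop :=
  forall i, #|Pa N i| <= k.

Definition num_edges n (N : cpnet n) : nat := \sum_(i < n) #|Pa N i|.

Definition flip n (N : cpnet n) : rel (outcome n) := fun o o' =>
  [exists i, [forall j, (j != i) ==> (o j == o' j)]
             && (o i != o' i) && (cpt N i o == Some (o' i))].

Definition pref n (N : cpnet n) (a b : outcome n) : bool :=
  [exists c, flip N b c && connect (flip N) c a].

Definition swapb n (x : outcome n * outcome n) : bool :=
  #|[set i | x.1 i != x.2 i]| == 1.
Definition swap_ex (n : nat) := {x : outcome n * outcome n | swapb x}.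

Definition MQ n (N : cpnet n) (x : swap_ex n) : bool :=
  pref N (val x).1 (val x).2.

(* A query-learning algorithm over n variables, modelled as an adaptive
   decision tree: either output a hypothesis CP-net, or ask a membership
   query on a swap example and continue depending on the answer. *)
Inductive qalg (n : nat) : Type :=
| Output : cpnet n -> qalg n
| Ask : swap_ex n -> (bool -> qalg n) -> qalg n.

Fixpoint run n (A : qalg n) (N : cpnet n) : cpnet n :=
  match A with
  | Output H => H
  | Ask x k => run (k (MQ N x)) N
  end.

Fixpoint num_queries n (A : qalg n) (N : cpnet n) : nat :=
  match A with
  | Output _ => 0
  | Ask x k => (num_queries (k (MQ N x)) N).+1
  end.

Definition same_cpnet n (H N : cpnet n) : Prop :=
  (forall i, Pa H i = Pa N i) /\ (forall i o, cpt H i o = cpt N i o).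

Definition k_universal (m k : nat) (S : {set {ffun 'I_m -> bool}}) : bool :=
  [forall K : {set 'I_m}, (#|K| == k) ==>
     [forall v : {ffun 'I_m -> bool},
        [exists s in S, [forall j in K, s j == v j]]]].

(* U_k : smallest size of a k-universal S \subseteq {0,1}^(n-1)
   (for k <= n-1 the full set is k-universal, so the default 2^(n-1) is
   an upper bound that is never strictly needed) *)
Definition U_k (n k : nat) : nat :=
  \big[minn/2 ^ (n - 1)]_(S : {set {ffun 'I_(n - 1) -> bool}} | k_universal k S) #|S|.

From mathcomp Require Import all_boot zify.
Set Implicit Arguments. Unset Strict Implicit. Unset Printing Implicit Defensive.

(* Acyclicity makes swap queries local: if a and b differ only in v_i, then a is
   preferred to b iff the CPT of v_i, in the context of b, prefers the value a_i.
   Indeed, along an improving flip path from b to a, a changed variable none of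
   whose parents ever changes sees a constant context, so it moves at most once,
   towards its preferred value; at the end of the path only v_i has moved.  Two
   queries therefore read one CPT entry.  For each v_i the learner reads its CPT
   on a k-universal set S of contexts, which realises every assignment to
   Pa(v_i).  While two of these contexts agree on the parents found so far but
   get different entries, a binary search along the path between them exposes
   a new parent with 2 log n queries.  In total: 2 n |S| + O(e log n) queries. *)

Inductive qcomp (n : nat) (A : Type) : Type :=
| Ret of A
| Query of swap_ex n & (bool -> qcomp n A).
Arguments Ret {n A}.

Section QueryComputations.
Variable n : nat.

Fixpoint qbind A B (m : qcomp n A) (f : A -> qcomp n B) : qcomp n B :=
  match m with Ret a => f a | Query x k => Query x (fun b => qbind (k b) f) end.

Fixpoint qalg_of (m : qcomp n (cpnet n)) : qalg n :=
  match m with Ret H => Output H | Query x k => Ask x (fun b => qalg_of (k b)) end.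

Fixpoint qtabulate (T : eqType) A (g : T -> qcomp n A) (d : T -> A) (l : seq T) :
    qcomp n (T -> A) :=
  if l is x :: l' then
    qbind (g x) (fun a => qbind (qtabulate g d l') (fun f =>
      Ret (fun y => if y == x then a else f y)))
  else Ret d.

Variable answer : swap_ex n -> bool.

Fixpoint qeval A (m : qcomp n A) : A :=
  match m with Ret a => a | Query x k => qeval (k (answer x)) end.

Fixpoint qcount A (m : qcomp n A) : nat :=
  match m with Ret _ => 0 | Query x k => (qcount (k (answer x))).+1 end.

Lemma qeval_bind A B (m : qcomp n A) (f : A -> qcomp n B) :
  qeval (qbind m f) = qeval (f (qeval m)).
Proof. by elim: m => //= x k ->. Qed.

Lemma qcount_bind A B (m : qcomp n A) (f : A -> qcomp n B) :
  qcount (qbind m f) = qcount m + qcount (f (qeval m)).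
Proof. by elim: m => //= x k ->. Qed.

Lemma qeval_tabulate (T : eqType) A (g : T -> qcomp n A) d l y :
  y \in l -> qeval (qtabulate g d l) y = qeval (g y).
Proof.
elim: l => //= x l IH; rewrite inE !qeval_bind /=.
by case: eqP => [-> | _] //= /IH.
Qed.

Lemma qcount_tabulate (T : eqType) A (g : T -> qcomp n A) d l :
  qcount (qtabulate g d l) = \sum_(x <- l) qcount (g x).
Proof.
by elim: l => [|x l IH]; rewrite ?big_nil ?big_cons //= !qcount_bind IH addn0.
Qed.

End QueryComputations.

Lemma run_qalg_of n (m : qcomp n (cpnet n)) N : run (qalg_of m) N = qeval (MQ N) m.
Proof. by elim: m => //= x k IH. Qed.

Lemma num_queries_qalg_of n (m : qcomp n (cpnet n)) N :
  num_queries (qalg_of m) N = qcount (MQ N) m.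
Proof. by elim: m => //= x k ->. Qed.

Lemma exists_superset_card (T : finType) (A : {set T}) k : #|A| <= k <= #|T| ->
  exists2 B : {set T}, A \subset B & #|B| = k.
Proof.
case/andP => A_le k_le.
have [s [s_uniq s_size s_notA]] :
    exists s, [/\ uniq s, size s = k - #|A| & {subset s <= ~: A}].
  by apply/card_geqP; move: k_le; rewrite -(cardsC A); lia.
exists (A :|: [set x in s]); first exact: subsetUl.
have AIs : A :&: [set x in s] = set0.
  by apply/setP => x; rewrite !inE; apply/andP => -[xA /s_notA]; rewrite inE xA.
by rewrite cardsU AIs cards0 subn0 cardsE (card_uniqP s_uniq) s_size subnKC.
Qed.

Lemma k_universal_cover m k (S : {set {ffun 'I_m -> bool}}) (K : {set 'I_m})
    (v : {ffun 'I_m -> bool}) :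
  k_universal k S -> #|K| <= k <= m -> exists2 s, s \in S & {in K, s =1 v}.
Proof.
move=> S_univ K_le.
have /exists_superset_card[K' KK' /eqP K'_card] : #|K| <= k <= #|'I_m| by rewrite card_ord.
move/forallP/(_ K')/implyP/(_ K'_card)/forallP/(_ v)/existsP: S_univ => -[s /andP[sS s_v]].
by exists s => // j /(subsetP KK') jK'; apply/eqP; move/forallP/(_ j)/implyP: s_v; apply.
Qed.

Lemma k_universal_setT m k : k_universal k [set: {ffun 'I_m -> bool}].
Proof.
apply/forallP => K; apply/implyP => _; apply/forallP => v; apply/existsP.
by exists v; rewrite in_setT; apply/forallP => j; apply/implyP.
Qed.

Lemma num_edges_le n k (N : cpnet n) : k_bounded k N -> num_edges N <= n * k.
Proof.
move=> k_bnd; rewrite -{2}[n]card_ord -sum_nat_const.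
by apply: leq_sum => i _; apply: k_bnd.
Qed.

Lemma acyclic_minimal (T : finType) (e : rel T) (F : {set T}) x :
  (forall y, ~~ [exists z, e y z && connect e z y]) -> x \in F ->
  exists2 v, v \in F & forall u, e u v -> u \notin F.
Proof.
move=> acyc xF; pose ancestors v := [set u | connect e u v].
have [v vF v_min] := arg_minnP (fun v => #|ancestors v|) xF.
exists v => // u euv; apply/negP => /v_min; apply/negP; rewrite -ltnNge.
apply: proper_card; apply/properP; split.
  by apply/subsetP => w; rewrite !inE => /connect_trans; apply; apply: connect1.
exists v; rewrite !inE ?connect0 //.
by apply: contra (acyc u) => evu; apply/existsP; exists v; rewrite euv.
Qed.

Definition set_var n (o : outcome n) (i : 'I_n) (b : bool) : outcome n :=
  [ffun j => if j == i then b else o j].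

Lemma swapb_set_var n (o : outcome n) i b : swapb (set_var o i b, set_var o i (~~ b)).
Proof.
rewrite /swapb (_ : [set j | _] = [set i]) ?cards1 //.
by apply/setP => j; rewrite !inE !ffunE; case: (j == i); rewrite ?eqxx //; case: b.
Qed.

Definition swap_at n (o : outcome n) i b : swap_ex n :=
  exist _ (set_var o i b, set_var o i (~~ b)) (swapb_set_var o i b).

Definition query_cpt n (i : 'I_n) (o : outcome n) : qcomp n (option bool) :=
  Query (swap_at o i true) (fun prefers_true =>
  Query (swap_at o i false) (fun prefers_false =>
  Ret (if prefers_true then Some true else if prefers_false then Some false else None))).

Definition mix n (a b : outcome n) (D : seq 'I_n) : outcome n :=
  [ffun j => if j \in D then b j else a j].

(* Invariant: the CPT entry of v_i is ca at a but not at mix a b D, so D contains a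
   parent of v_i; querying the midpoint tells which half of D still does. *)
Fixpoint find_parent n (i : 'I_n) (ca : option bool) (a b : outcome n) (D : seq 'I_n)
    (fuel : nat) : qcomp n 'I_n :=
  if size D <= 1 then Ret (head i D) else
  if fuel is f.+1 then
    let mid := mix a b (take (size D %/ 2) D) in
    qbind (query_cpt i mid) (fun c =>
      if c == ca then find_parent i ca mid b (drop (size D %/ 2) D) f
      else find_parent i ca a b (take (size D %/ 2) D) f)
  else Ret (head i D).

Notation ctx n := {ffun 'I_(n - 1) -> bool}.

(* v_i itself gets the dummy value false, harmless since v_i is not its own parent. *)
Definition embed n (i : 'I_n) (s : ctx n) : outcome n :=
  [ffun j => if unlift i j is Some c then s (cast_ord (esym (subn1 n)) c) else false].

Definition agree_on n (o o' : outcome n) (P : {set 'I_n}) := [forall u in P, o u == o' u].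

Fixpoint find_parents n (i : 'I_n) (S : {set ctx n}) (F : ctx n -> option bool) (t : nat)
    (fuel : nat) (P : {set 'I_n}) : qcomp n {set 'I_n} :=
  if fuel is f.+1 then
    if [pick p : ctx n * ctx n | [&& p.1 \in S, p.2 \in S,
          agree_on (embed i p.1) (embed i p.2) P & F p.1 != F p.2]] is Some (s, s')
    (* s and s' agree on P, so flipping the variables outside P leads from one to
       the other, and the parent found is a new one. *)
    then qbind (find_parent i (F s) (embed i s) (embed i s') (enum (~: P)) t)
               (fun j => find_parents i S F t f (j |: P))
    else Ret P
  else Ret P.

Definition learn_var n (S : {set ctx n}) (t k : nat) (i : 'I_n) :
    qcomp n ({set 'I_n} * (outcome n -> option bool)) :=
  qbind (qtabulate (fun s => query_cpt i (embed i s)) (fun _ => None) (enum S)) (fun F =>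
  qbind (find_parents i S F t k set0) (fun P =>
  Ret (P, fun o => if [pick s in S | agree_on (embed i s) o P] is Some s then F s else None))).

Definition learner n (S : {set ctx n}) (t k : nat) : qcomp n (cpnet n) :=
  qbind (qtabulate (learn_var S t k) (fun _ => (set0, fun _ => None)) (enum 'I_n)) (fun L =>
  Ret (CPNet (fun i => (L i).1) (fun i => (L i).2))).

Lemma qcount_find_parent n (ans : swap_ex n -> bool) i ca (a b : outcome n) D fuel :
  qcount ans (find_parent i ca a b D fuel) <= 2 * fuel.
Proof.
elim: fuel a D => [|f IH] a D /=; case: ifP => //= _.
by rewrite mulnS add2n !ltnS; case: ifP.
Qed.

Lemma mix_cat n (a b : outcome n) D1 D2 : mix (mix a b D1) b D2 = mix a b (D1 ++ D2).
Proof. by apply/ffunP => j; rewrite !ffunE mem_cat; case: (j \in D2); rewrite ?orbT ?orbF. Qed.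

Lemma mix_agree n (a b : outcome n) P : agree_on a b P -> mix a b (enum (~: P)) = b.
Proof.
move=> /forallP ab_P; apply/ffunP => j; rewrite ffunE mem_enum inE.
by case: ifP => // /negbFE j_P; apply/eqP; move: (ab_P j); rewrite j_P.
Qed.

Lemma embed_lift n (i : 'I_n) (s : ctx n) c : embed i s (lift i (cast_ord (subn1 n) c)) = s c.
Proof. by rewrite ffunE liftK cast_ordK. Qed.

Section Preference.
Variables (n : nat) (N : cpnet n).

Lemma flip_changed x z v : flip N x z -> x v != z v -> cpt N v x = Some (z v).
Proof.
case/existsP => j /andP[/andP[/forallP same _] /eqP cpt_j] xz_v.
have [-> // | vj] := eqVneq v j.
by move: (same v) xz_v; rewrite vj => /eqP ->; rewrite eqxx.
Qed.

Section ConstantCpt.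
Variables (v : 'I_n) (c : option bool).

Lemma flip_path_fixed x s :
    path (flip N) x s -> {in x :: s, forall y : outcome n, cpt N v y = c} ->
  c != Some (~~ x v) -> {in x :: s, forall y : outcome n, y v = x v}.
Proof.
elim: s x => [|z s IH] x /=; first by move=> _ _ _ y; rewrite inE => /eqP ->.
case/andP=> xz path_z cpt_c c_x.
have z_v : z v = x v.
  apply/eqP; apply: contraNT c_x => zx_v.
  rewrite -(cpt_c x (mem_head _ _)) (flip_changed xz) 1?eq_sym //.
  by move: zx_v; case: (z v) (x v) => [] [].
move=> y; rewrite inE => /predU1P[-> // | y_s]; rewrite -z_v.
apply: IH => //; last by rewrite z_v.
by move=> w w_s; apply: cpt_c; rewrite inE w_s orbT.
Qed.

Lemma flip_path_last x s :
    path (flip N) x s -> {in x :: s, forall y : outcome n, cpt N v y = c} ->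
  has (fun y : outcome n => y v != x v) s -> c = Some (~~ x v) /\ last x s v = ~~ x v.
Proof.
move=> path_s cpt_c changed.
have c_x : c = Some (~~ x v).
  apply/eqP; apply: contraLR changed => /(flip_path_fixed path_s cpt_c) fixed.
  by apply/hasPn => y y_s; rewrite fixed ?negbK // inE y_s orbT.
split => //; elim: s x path_s cpt_c changed c_x => //= z s IH x /andP[xz path_z] cpt_c.
have cpt_z : {in z :: s, forall y : outcome n, cpt N v y = c}.
  by move=> y y_s; apply: cpt_c; rewrite inE y_s orbT.
have [z_v | zx_v] := eqVneq (z v) (x v).
  by rewrite /= -z_v; apply: IH.
move=> _ c_x; have z_v : z v = ~~ x v by move: zx_v; case: (z v) (x v) => [] [].
rewrite -z_v (flip_path_fixed path_z cpt_z) ?mem_last // c_x z_v negbK.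
by case: (x v).
Qed.
End ConstantCpt.

Hypotheses (wf : cpnet_wf N) (acyc : acyclic N).

Lemma cpt_agree i (o o' : outcome n) : {in Pa N i, o =1 o'} -> cpt N i o = cpt N i o'.
Proof. by case: wf => _ [cpt_ctx _]; apply: cpt_ctx. Qed.

Lemma pref_swap (a b : outcome n) i : (forall j, j != i -> a j = b j) -> a i != b i ->
  pref N a b = (cpt N i b == Some (a i)).
Proof.
move=> ab_off ab_i; apply/idP/eqP => [|cpt_b]; last first.
  apply/existsP; exists a; rewrite connect0 andbT; apply/existsP; exists i.
  rewrite cpt_b eq_sym ab_i eqxx !andbT; apply/forallP => j.
  by apply/implyP => /ab_off ->.
case/existsP => c /andP[bc /connectP[p path_p a_last]].
pose changed := [set j | has (fun y : outcome n => y j != b j) (c :: p)].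
have i_changed : i \in changed.
  by rewrite inE; apply/hasP; exists a; rewrite // a_last mem_last.
have [v v_changed v_src] := @acyclic_minimal _ (dep_edge N) changed i acyc i_changed.
have cpt_v : {in b :: c :: p, forall y : outcome n, cpt N v y = cpt N v b}.
  move=> y y_path; apply: cpt_agree => u /v_src; rewrite inE => /hasPn unchanged.
  by move: y_path; rewrite inE => /predU1P[-> // | /unchanged]; rewrite negbK => /eqP.
have path_b : path (flip N) b (c :: p) by rewrite /= bc.
rewrite inE in v_changed.
have [cpt_b last_v] := flip_path_last path_b cpt_v v_changed.
have a_v : a v = ~~ b v by rewrite a_last.
have vi : v = i by apply/eqP/negPn/negP => /ab_off; rewrite a_v; case: (b v).
by rewrite -vi cpt_b a_v.
Qed.

Lemma cpt_set_var (o : outcome n) i b : cpt N i (set_var o i b) = cpt N i o.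
Proof.
apply: cpt_agree => j j_Pa; rewrite ffunE; case: eqP => // ji.
by case: wf => notin_Pa _; move: j_Pa; rewrite ji (negPf (notin_Pa i)).
Qed.

Lemma MQ_swap_at (o : outcome n) i b : MQ N (swap_at o i b) = (cpt N i o == Some b).
Proof.
rewrite /MQ /= (@pref_swap _ _ i) ?cpt_set_var ?ffunE ?eqxx //; last by case: b.
by move=> j /negPf ji; rewrite !ffunE ji.
Qed.

Lemma qeval_query_cpt i (o : outcome n) : qeval (MQ N) (query_cpt i o) = cpt N i o.
Proof. by rewrite /= !MQ_swap_at; case: (cpt N i o) => [[]|]. Qed.

Lemma has_parent_mix i (a b : outcome n) D :
  cpt N i (mix a b D) != cpt N i a -> has (mem (Pa N i)) D.
Proof.
apply: contraNT => /hasPn no_parent; apply/eqP/cpt_agree => j j_Pa.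
by rewrite ffunE; case: ifP => // /no_parent; rewrite /= j_Pa.
Qed.

Lemma head_parent i ca (a b : outcome n) D :
    cpt N i a = ca -> cpt N i (mix a b D) != ca -> size D <= 1 ->
  head i D \in [predI D & Pa N i].
Proof.
by move=> <- /has_parent_mix; case: D => [|j []] //=; rewrite orbF !inE eqxx.
Qed.

Lemma find_parent_correct i ca (a b : outcome n) D fuel :
  size D <= 2 ^ fuel -> cpt N i a = ca -> cpt N i (mix a b D) != ca ->
  qeval (MQ N) (find_parent i ca a b D fuel) \in [predI D & Pa N i].
Proof.
elim: fuel a D => [|f IH] a D D_le a_ca mixD; cbn [find_parent];
  have head_D := head_parent a_ca mixD.
  by case: ifP => [/head_D // | D_gt1]; move: D_le; rewrite D_gt1.
case: ifP => [/head_D // | D_gt1].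
rewrite qeval_bind qeval_query_cpt; set h := size D %/ 2.
have [mid_ca | /eqP mid_ca] := eqP.
  have mid_D : mix (mix a b (take h D)) b (drop h D) = mix a b D.
    by rewrite mix_cat cat_take_drop.
  have := IH _ (drop h D) _ mid_ca; rewrite mid_D => /(_ _ mixD).
  rewrite size_drop !inE => /(_ _)/andP[]; first by move: D_le; rewrite expnS; lia.
  by move=> /mem_drop -> ->.
have := IH a (take h D) _ a_ca mid_ca.
rewrite size_take !inE => /(_ _)/andP[]; first by move: D_le; rewrite expnS; case: ifP; lia.
by move=> /mem_take -> ->.
Qed.

Section FindParents.
Variables (i : 'I_n) (S : {set ctx n}) (F : ctx n -> option bool) (t : nat).
Hypotheses (F_cpt : {in S, forall s, F s = cpt N i (embed i s)})
  (S_covers : forall o : outcome n, exists2 s, s \in S & {in Pa N i, embed i s =1 o})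
  (n_le : n <= 2 ^ t).

Lemma parents_of_no_split (P : {set 'I_n}) : P \subset Pa N i ->
    (forall s s', s \in S -> s' \in S -> agree_on (embed i s) (embed i s') P -> F s = F s') ->
  P = Pa N i.
Proof.
move=> P_Pa no_split; apply/eqP; rewrite eqEsubset P_Pa /=; apply/subsetP => j j_Pa.
apply: contraT => j_P; case: wf => _ [_ /(_ i j j_Pa) [o [o' [oo' cpt_oo']]]].
have [s sS s_o] := S_covers o; have [s' s'S s'_o'] := S_covers o'.
case: cpt_oo'; rewrite -(cpt_agree s_o) -(cpt_agree s'_o') -!F_cpt //.
apply: no_split => //; apply/forallP => u; apply/implyP => u_P.
have u_Pa := subsetP P_Pa u u_P.
by rewrite s_o // s'_o' // oo' //; apply: contraNneq j_P => <-.
Qed.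

Lemma find_parents_correct fuel (P : {set 'I_n}) :
    P \subset Pa N i -> #|Pa N i| <= #|P| + fuel ->
  qeval (MQ N) (find_parents i S F t fuel P) = Pa N i /\
  qcount (MQ N) (find_parents i S F t fuel P) <= 2 * t * (#|Pa N i| - #|P|).
Proof.
elim: fuel P => [|f IH] P P_Pa Pa_le /=.
  suff -> : P = Pa N i by [].
  by apply/eqP; rewrite eqEcard P_Pa -(addn0 #|P|).
case: pickP => [[s s'] /and4P[/= sS s'S agree_ss' F_ss'] | no_split]; last first.
  suff -> : P = Pa N i by [].
  apply: parents_of_no_split => // s s' sS s'S agree_ss'.
  by apply/eqP; move: (no_split (s, s')); rewrite /= sS s'S agree_ss' => /negbFE.
rewrite qeval_bind qcount_bind.
set j := qeval _ (find_parent _ _ _ _ _ _).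
have : j \in [predI enum (~: P) & Pa N i].
  apply: find_parent_correct; first by rewrite -cardE (leq_trans (max_card _)) ?card_ord.
    by rewrite F_cpt.
  by rewrite mix_agree // -F_cpt // eq_sym.
rewrite !inE mem_enum inE => /andP[j_P j_Pa].
have jP_Pa : j |: P \subset Pa N i by rewrite subUset sub1set j_Pa.
have card_jP : #|j |: P| = #|P|.+1 by rewrite cardsU1 j_P.
have Pa_le' : #|Pa N i| <= #|j |: P| + f by rewrite card_jP addSnnS.
have [-> count_le] := IH _ jP_Pa Pa_le'.
split => //; have P_lt : #|P| < #|Pa N i| by rewrite -card_jP subset_leq_card.
rewrite card_jP in count_le; rewrite -subnSK // mulnS.
exact: leq_add (qcount_find_parent _ _ _ _ _ _ _) count_le.
Qed.
End FindParents.

Lemma universal_covers_parents k (S : {set ctx n}) i :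
  k_universal k S -> #|Pa N i| <= k -> k <= n - 1 ->
  forall o : outcome n, exists2 s, s \in S & {in Pa N i, embed i s =1 o}.
Proof.
move=> S_univ Pa_le k_le o.
pose g c := lift i (cast_ord (subn1 n) c).
have g_inj : injective g by move=> c c' /lift_inj/cast_ord_inj.
have [|s sS s_o] := @k_universal_cover _ _ _ (g @^-1: Pa N i) [ffun c => o (g c)] S_univ.
  rewrite k_le andbT (leq_trans _ Pa_le) // -(card_imset _ g_inj) subset_leq_card //.
  by apply/subsetP => x /imsetP[c]; rewrite inE => c_Pa ->.
exists s => // u u_Pa; have /unlift_some[c0 u_lift _] : i != u.
  by apply: contraTneq u_Pa => <-; case: wf.
have u_g : u = g (cast_ord (esym (subn1 n)) c0) by rewrite /g cast_ordKV.
by rewrite u_g embed_lift s_o ?ffunE // inE -u_g.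
Qed.

Lemma learn_var_correct k (S : {set ctx n}) t i :
  k_universal k S -> #|Pa N i| <= k -> k <= n - 1 -> n <= 2 ^ t ->
  [/\ (qeval (MQ N) (learn_var S t k i)).1 = Pa N i,
      (qeval (MQ N) (learn_var S t k i)).2 =1 cpt N i &
      qcount (MQ N) (learn_var S t k i) <= 2 * #|S| + 2 * t * #|Pa N i|].
Proof.
move=> S_univ Pa_le k_le n_le.
have covers := universal_covers_parents S_univ Pa_le k_le.
rewrite /learn_var qeval_bind qcount_bind qcount_tabulate.
set F := qeval _ (qtabulate _ _ _).
have F_cpt : {in S, forall s, F s = cpt N i (embed i s)}.
  by move=> s sS; rewrite /F qeval_tabulate ?mem_enum // qeval_query_cpt.
have [|P_eq count_le] := find_parents_correct F_cpt covers n_le (fuel := k) (sub0set _).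
  by rewrite cards0.
rewrite qeval_bind qcount_bind P_eq /= addn0; split => //.
  move=> o; case: pickP => [s /andP[sS /forallP s_o] | no_s].
    rewrite F_cpt //; apply: cpt_agree => u u_Pa; apply/eqP.
    by move/implyP: (s_o u); apply.
  have [s sS s_o] := covers o; move: (no_s s); rewrite sS /=.
  by move/negbT/forallPn => -[u]; rewrite negb_imply => /andP[/s_o ->]; rewrite eqxx.
rewrite cards0 subn0 in count_le; apply: leq_add => //.
by rewrite big_enum sum_nat_const mulnC.
Qed.

Lemma learner_correct k (S : {set ctx n}) t :
  k_universal k S -> k_bounded k N -> k <= n - 1 -> n <= 2 ^ t ->
  same_cpnet (qeval (MQ N) (learner S t k)) N /\
  qcount (MQ N) (learner S t k) <= 2 * #|S| * n + 2 * t * num_edges N.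
Proof.
move=> S_univ k_bnd k_le n_le.
have learn_i i := learn_var_correct (t := t) S_univ (k_bnd i) k_le n_le.
rewrite /learner qeval_bind qcount_bind qcount_tabulate /= addn0; split.
  by split => i /=; rewrite qeval_tabulate ?mem_enum //; case: (learn_i i).
have -> : 2 * #|S| * n = \sum_(i < n) 2 * #|S| by rewrite sum_nat_const card_ord mulnC.
rewrite big_enum /num_edges big_distrr -big_split /=.
by apply: leq_sum => i _; case: (learn_i i).
Qed.
End Preference.

Definition min_universal m k : {set {ffun 'I_m -> bool}} :=
  [arg min_(S < [set: {ffun 'I_m -> bool}] | k_universal k S) #|S|].

Lemma min_universalP n k :
  k_universal k (min_universal (n - 1) k) /\ #|min_universal (n - 1) k| <= U_k n k.
Proof.
rewrite /min_universal; case: arg_minnP => [|S S_univ S_min]; first exact: k_universal_setT.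
split => //; rewrite /U_k; apply: (big_ind (fun x => #|S| <= x)) => //.
- rewrite (leq_trans (S_min _ (k_universal_setT _ _))) //.
  by rewrite cardsT card_ffun card_bool card_ord.
- by move=> x y; rewrite leq_min => -> ->.
Qed.

Theorem theorem9 :
  exists (C : nat) (A : forall n k : nat, qalg n),
    forall (n k : nat), 1 <= n -> k <= n - 1 ->
    forall N : cpnet n, cpnet_wf N -> acyclic N -> k_bounded k N ->
      same_cpnet (run (A n k) N) N /\
      num_queries (A n k) N <= C * (n * U_k n k + num_edges N * trunc_log 2 n).
Proof.
exists 4, (fun n k => qalg_of (learner (min_universal (n - 1) k) (trunc_log 2 n).+1 k)).
move=> n k n_ge1 k_le N wf acyc k_bnd.
have [S_univ S_le] := min_universalP n k.
have n_lt : n < 2 ^ (trunc_log 2 n).+1 by apply: trunc_log_ltn.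
have [same count_le] := learner_correct wf acyc S_univ k_bnd k_le (ltnW n_lt).
rewrite run_qalg_of num_queries_qalg_of; split => //; apply: leq_trans count_le _.
have S_n := leq_mul S_le (leqnn n).
have [n1 | n_ge2] := eqVneq n 1.
  have edges0 : num_edges N = 0.
    by apply/eqP; rewrite -leqn0 -(muln0 n) (_ : 0 = k) ?num_edges_le //; lia.
  by rewrite edges0; lia.
have log_gt0 : 0 < trunc_log 2 n by rewrite trunc_log_gt0 /=; lia.
nia.
Qed.
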